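(* Let $n\ge1$, let $\gamma,\beta$ be proper $3$-colorings of the $2\times n$ grid graph $M^*_{2,n}$, and for an even integer $H$ set $y_{i,j}(H)=H+h_{\gamma,v_{1,1}}(\beta,v_{i,j})$ ($i\in\{1,2\}$, $1\le j\le n$). If $H$ is an even integer minimizing $S(H)=\sum_{v\in V(M^*_{2,n})}|H+h_{\gamma,v_{1,1}}(\beta,v)|=\sum_{i=1}^2\sum_{j=1}^n|y_{i,j}(H)|$ over even integers, then at least one of the two median values of the multiset $Y=\{y_{i,j}(H)\}$ (its $n$-th and $(n+1)$-th smallest elements) equals $0$.
   Context: $M^*_{2,n}$ is the grid graph with vertices $v_{i,j}$ ($i\in\{1,2\}$, $1\le j\le n$), $v_{i,j}$ adjacent to $v_{i,j\pm1}$ and $v_{3-i,j}$. Colors lie in $\mathbb{Z}_3$. For a proper $3$-coloring $\gamma$ and an edge traversed from $a$ to $b$, its weight $w(\gamma,\overrightarrow{ab})\in\{1,-1\}$ is congruent to $\gamma(b)-\gamma(a)$ mod $3$; the weight $w(\gamma,P)$ of a directed path is the sum of its edge weights. For any proper $3$-coloring the weight of a directed path from $u$ to $v$ depends only on $u,v$. The relative height is $h_{\gamma,u}(\beta,v)=w(\beta,P_{u,v})-w(\gamma,P_{u,v})$ for any directed path $P_{u,v}$ from $u$ to $v$ (always an even integer). *)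

From HB Require Import structures.
From mathcomp Require Import all_boot all_order all_algebra.
Set Implicit Arguments. Unset Strict Implicit. Unset Printing Implicit Defensive.
Import Order.TTheory GRing.Theory Num.Theory.
Local Open Scope ring_scope.

(* Vertices of M*_{2,n}: v_{i,j} is (i-1, j-1) : 'I_2 * 'I_n (0-indexed). *)
Definition V (n : nat) := ('I_2 * 'I_n)%type.

Definition row1 : 'I_2 := ord0.
Definition row2 : 'I_2 := ord_max.

Definition adj (n : nat) (u v : V n) : bool :=
  ((u.1 == v.1) && ((u.2.+1 == v.2 :> nat) || (v.2.+1 == u.2 :> nat)))
  || ((u.2 == v.2) && (u.1 != v.1)).

Definition coloring (n : nat) := V n -> 'Z_3.

Definition proper_col (n : nat) (c : coloring n) : Prop :=
  forall u v : V n, adj u v -> c u != c v.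

(* Weight of the edge traversed from a to b: the element of {1,-1}
   congruent to c b - c a mod 3 (for a proper coloring). *)
Definition eweight (n : nat) (c : coloring n) (a b : V n) : int :=
  if c b - c a == 1 then 1 else -1.

Fixpoint pweight (n : nat) (c : coloring n) (x : V n) (s : seq (V n)) : int :=
  match s with
  | [::] => 0
  | y :: s' => eweight c x y + pweight c y s'
  end.

Definition v11 (n : nat) (hn : (0 < n)%N) : V n := (row1, Ordinal hn).

(* A canonical directed path from v_{1,1} to v (listing the vertices after
   v_{1,1}): along row 1 to column of v, then down to row 2 if needed. *)
Definition cpath (n : nat) (v : V n) : seq (V n) :=
  map (fun k : 'I_n => (row1, k))
      (filter (fun k : 'I_n => (0 < k <= v.2)%N) (enum 'I_n))
  ++ (if v.1 == row2 then [:: v] else [::]).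

(* Relative height h_{gamma, v11}(beta, v) = w(beta,P) - w(gamma,P). *)
Definition relheight (n : nat) (hn : (0 < n)%N) (gamma beta : coloring n)
  (v : V n) : int :=
  pweight beta (v11 hn) (cpath v) - pweight gamma (v11 hn) (cpath v).

Definition Ssum (n : nat) (hn : (0 < n)%N) (gamma beta : coloring n) (H : int)
  : int := \sum_(v : 'I_2 * 'I_n) `|H + relheight hn gamma beta v|.

Definition Ysorted (n : nat) (hn : (0 < n)%N) (gamma beta : coloring n)
  (H : int) : seq int :=
  sort (fun a b : int => a <= b)
    [seq H + relheight hn gamma beta v | v <- enum [set: 'I_2 * 'I_n]].

From Pilot Require Import Defs.
From HB Require Import structures.
From mathcomp Require Import all_boot all_order all_algebra.
From mathcomp Require Import zify.
Import Order.TTheory GRing.Theory Num.Theory.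
Local Open Scope ring_scope.

(* Since all the y_{i,j} are even, replacing H by H + 2 changes S by
   2 (#{y >= 0} - #{y < 0}), and replacing it by H - 2 changes S by
   2 (#{y <= 0} - #{y > 0}).  Minimality of S(H) thus makes 0 a median of Y:
   at most n entries are negative and at most n are positive.  The n-th or
   (n+1)-th order statistic is then 0 provided 0 occurs in Y at all.  Along
   row 1 consecutive heights differ by at most 2, and each row-2 height is
   within 2 of the one above it, so a discrete intermediate value argument for
   even integers yields a zero of y as soon as y takes a nonpositive and a
   nonnegative value, which the median property guarantees. *)

Lemma count_lt0_ge0 (s : seq int) :
  (count (< 0)%R s + count (>= 0)%R s)%N = size s.
Proof.
rewrite -(count_predC (< 0)%R); congr addn.
by apply: eq_count => y; rewrite /= leNgt.
Qed.

Lemma count_gt0_le0 (s : seq int) :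
  (count (> 0)%R s + count (<= 0)%R s)%N = size s.
Proof.
rewrite -(count_predC (> 0)%R); congr addn.
by apply: eq_count => y; rewrite /= leNgt.
Qed.

Lemma median_eq0 (s : seq int) (n : nat) : size s = (2 * n)%N ->
  (count (< 0)%R s <= count (>= 0)%R s)%N -> (count (> 0)%R s <= count (<= 0)%R s)%N ->
  0 \in s ->
  nth 0 (sort <=%R s) n.-1 = 0 \/ nth 0 (sort <=%R s) n = 0.
Proof.
move=> size_s neg_le pos_le s0.
have lt_ge := count_lt0_ge0 s.
have gt_le := count_gt0_le0 s.
have lt_le : (count (< 0)%R s < count (<= 0)%R s)%N by rewrite count_lt_le_mem.
have nth_sort i : (count (< 0)%R s <= i < count (<= 0)%R s)%N -> nth 0 (sort <=%R s) i = 0.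
  by move=> i_mid; apply: nth_count_eq; rewrite ?sort_sorted ?count_sort //; exact: le_total.
have [neg_small|neg_big] := ltnP (count (< 0)%R s) n.
- by left; apply: nth_sort; lia.
- by right; apply: nth_sort; lia.
Qed.

Lemma sum_abs_addr2 (s : seq int) : all (fun x => 2 %| x)%Z s ->
  \sum_(x <- s) `|x + 2| =
  \sum_(x <- s) `|x| + 2 * ((count (>= 0)%R s)%:Z - (count (< 0)%R s)%:Z).
Proof.
elim: s => [|x s IH]; first by rewrite !big_nil.
rewrite /= !big_cons => /andP[x_even /IH ->].
have [x_ge0|x_lt0] := leP 0 x; rewrite /=; lia.
Qed.

Lemma count_lt0_le_ge0 (s : seq int) : all (fun x => 2 %| x)%Z s ->
  \sum_(x <- s) `|x| <= \sum_(x <- s) `|x + 2| ->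
  (count (< 0)%R s <= count (>= 0)%R s)%N.
Proof. by move=> s_even; rewrite sum_abs_addr2 //; lia. Qed.

Lemma count_gt0_le_le0 (s : seq int) : all (fun x => 2 %| x)%Z s ->
  \sum_(x <- s) `|x| <= \sum_(x <- s) `|x - 2| ->
  (count (> 0)%R s <= count (<= 0)%R s)%N.
Proof.
move=> s_even opt.
have := @count_lt0_le_ge0 (map -%R s).
rewrite all_map !big_map !count_map.
have -> : count (preim -%R (< 0)%R) s = count (> 0)%R s.
  by apply: eq_count => x; rewrite /= oppr_lt0.
have -> : count (preim -%R (>= 0)%R) s = count (<= 0)%R s.
  by apply: eq_count => x; rewrite /= oppr_ge0.
apply.
  by apply: sub_all s_even => x /=; rewrite unfold_in /=; lia.
under eq_bigr do rewrite normrN.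
by under [X in _ <= X]eq_bigr do rewrite addrC distrC.
Qed.

Lemma even_steps_root {f : nat -> int} {i j : nat} :
  (forall k, (2 %| f k)%Z) -> (forall k, (k < j)%N -> `|f k.+1 - f k| <= 2) ->
  (i <= j)%N -> f i <= 0 -> 0 <= f j -> exists2 k, (k <= j)%N & f k = 0.
Proof.
move=> f_even; elim: j => [|j IH] f_step le_ij fi_le0 fj_ge0.
  by exists 0%N => //; move: le_ij fi_le0; rewrite leqn0 => /eqP->; lia.
move: le_ij fi_le0; rewrite leq_eqVlt => /orP[/eqP-> fj_le0|le_ij fi_le0].
  by exists j.+1 => //; lia.
have [f_j_ge0|fj_lt0] := leP 0 (f j).
  have [k le_kj fk0] := IH (fun k lt_kj => f_step k (ltnW lt_kj)) le_ij fi_le0 f_j_ge0.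
  by exists k => //; apply: leqW.
(* f j is even and negative, hence at most -2, and the last step climbs by at most 2. *)
exists j.+1 => //; have := f_step j (ltnSn j); have := f_even j; lia.
Qed.

Lemma even_steps_root_between (f : nat -> int) (m i j : nat) :
  (forall k, (2 %| f k)%Z) -> (forall k, (k.+1 < m)%N -> `|f k.+1 - f k| <= 2) ->
  (i < m)%N -> (j < m)%N -> f i <= 0 -> 0 <= f j -> exists2 k, (k < m)%N & f k = 0.
Proof.
move=> f_even f_step i_lt j_lt fi_le0 fj_ge0.
have [le_ij|lt_ji] := leqP i j.
  have f_step_j k (lt_kj : (k < j)%N) := f_step k (leq_ltn_trans lt_kj j_lt).
  have [k le_kj fk0] := even_steps_root f_even f_step_j le_ij fi_le0 fj_ge0.
  by exists k => //; apply: leq_ltn_trans j_lt.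
have negf_even k : (2 %| - f k)%Z by have := f_even k; lia.
have negf_step k : (k < i)%N -> `|- f k.+1 - - f k| <= 2.
  by move=> lt_ki; have := f_step k (leq_ltn_trans lt_ki i_lt); lia.
have := even_steps_root negf_even negf_step (ltnW lt_ji).
rewrite oppr_le0 oppr_ge0 => /(_ fj_ge0 fi_le0)[k le_ki fk0].
by exists k; [apply: leq_ltn_trans i_lt | lia].
Qed.

Lemma pweight_rcons (n : nat) (c : coloring n) (x z : V n) (s : seq (V n)) :
  pweight c x (rcons s z) = pweight c x s + eweight c (last x s) z.
Proof.
elim: s x => [|y s IH] x /=; first by rewrite addr0 add0r.
by rewrite IH addrA.
Qed.

Lemma pweight_sub_even (n : nat) (c1 c2 : coloring n) (x : V n) (s : seq (V n)) :
  (2 %| pweight c1 x s - pweight c2 x s)%Z.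
Proof.
elim: s x => [|y s IH] x //=.
by have := IH y; rewrite /eweight; case: ifP => _; case: ifP => _; lia.
Qed.

Lemma filter_iota_pos_le (j m : nat) : (j < m)%N ->
  [seq k <- iota 0 m | (0 < k <= j)%N] = iota 1 j.
Proof.
move=> lt_jm; rewrite -(subnKC lt_jm) iotaD filter_cat /=.
rewrite (@eq_in_filter _ _ predT) ?filter_predT => [|k]; last by rewrite mem_iota /=; lia.
by rewrite (@eq_in_filter _ _ pred0) ?filter_pred0 ?cats0 // => k; rewrite mem_iota /=; lia.
Qed.

Section GridHeights.

Context {n : nat} (hn : (0 < n)%N) (gamma beta : coloring n).

Local Notation h := (relheight hn gamma beta).

Lemma relheight_even (v : V n) : (2 %| h v)%Z.
Proof. exact: pweight_sub_even. Qed.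

Lemma relheight_rcons {v v' z : V n} :
  cpath v' = rcons (cpath v) z -> `|h v' - h v| <= 2.
Proof.
rewrite /relheight => ->; rewrite !pweight_rcons /eweight.
by case: ifP => _; case: ifP => _; lia.
Qed.

Lemma cpath_row2 (k : 'I_n) :
  cpath (Defs.row2, k) = rcons (cpath (Defs.row1, k)) (Defs.row2, k).
Proof. by rewrite /cpath /= cats0 cats1. Qed.

Lemma cpath_row1_cols (k : 'I_n) :
  map val [seq j : 'I_n <- enum 'I_n | (0 < j <= k)%N] = iota 1 k.
Proof.
by rewrite -(filter_map val (fun j => 0 < j <= k)%N) val_enum_ord filter_iota_pos_le.
Qed.

Lemma cpath_row1S {j k : 'I_n} : k = j.+1 :> nat ->
  cpath (Defs.row1, k) = rcons (cpath (Defs.row1, j)) (Defs.row1, k).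
Proof.
move=> kE; rewrite /cpath /= !cats0 -map_rcons; congr map.
apply: (inj_map val_inj); rewrite map_rcons !cpath_row1_cols /= kE.
by rewrite -[j.+1]addn1 iotaD /= cats1 add1n addn1.
Qed.

Lemma relheight_root {H : int} {u w : V n} : (2 %| H)%Z ->
  H + h u <= 0 -> 0 <= H + h w -> exists v, H + h v = 0.
Proof.
move=> H_even yu_le0 yw_ge0.
pose y v := H + h v.
pose col k : 'I_n := insubd (Ordinal hn) k.
pose f k := y (Defs.row1, col k).
have y_even v : (2 %| y v)%Z by have := relheight_even v; rewrite /y; lia.
have f_step k : (k.+1 < n)%N -> `|f k.+1 - f k| <= 2.
  move=> lt_Sk_n; have colS : col k.+1 = (col k).+1 :> nat.
    by rewrite !val_insubd lt_Sk_n ltnW.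
  by have := relheight_rcons (cpath_row1S colS); rewrite /f /y; lia.
have near_row1 v : `|y v - f v.2| <= 2.
  case: v => i k; rewrite /f /col /= valKd.
  have [->|->] : i = Defs.row1 \/ i = Defs.row2.
    by case: i => [[|[|i]] lt_i2]; [left|right|by []]; apply: val_inj.
    by rewrite subrr normr0.
  by have := relheight_rcons (cpath_row2 k); rewrite /y; lia.
(* An even value within 2 of an even value of the opposite sign is 0. *)
have [fu_gt0|fu_le0] := ltP 0 (f u.2).
  by exists u; move: (near_row1 u) (y_even (Defs.row1, col u.2)) fu_gt0; rewrite /f /y; lia.
have [fw_lt0|fw_ge0] := ltP (f w.2) 0.
  by exists w; move: (near_row1 w) (y_even (Defs.row1, col w.2)) fw_lt0; rewrite /f /y; lia.
have [k _ fk0] := @even_steps_root_between f n u.2 w.2 (fun k => y_even _) f_step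
  (ltn_ord u.2) (ltn_ord w.2) fu_le0 fw_ge0.
by exists (Defs.row1, col k).
Qed.

End GridHeights.

Theorem lemma5p7 (n : nat) (hn : (0 < n)%N) (gamma beta : coloring n)
  (Hg : proper_col gamma) (Hb : proper_col beta) (H : int) :
  (2 %| H)%Z ->
  (forall H' : int, (2 %| H')%Z -> Ssum hn gamma beta H <= Ssum hn gamma beta H') ->
  nth 0 (Ysorted hn gamma beta H) n.-1 = 0 \/ nth 0 (Ysorted hn gamma beta H) n = 0.
Proof.
move=> H_even H_min.
pose s : seq int := [seq H + relheight hn gamma beta v | v <- enum [set: 'I_2 * 'I_n]].
have size_s : size s = (2 * n)%N by rewrite size_map -cardE cardsT card_prod !card_ord.
have s_even : all (fun x => 2 %| x)%Z s.
  by apply/allP => _ /mapP[v _ ->]; have := relheight_even hn gamma beta v; lia.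
have Ssum_shift c : Ssum hn gamma beta (H + c) = \sum_(x <- s) `|x + c|.
  rewrite /Ssum big_map big_enum /=.
  by apply: eq_big => [v|v _]; rewrite ?in_setT // addrAC.
have s_opt c : (2 %| c)%Z -> \sum_(x <- s) `|x| <= \sum_(x <- s) `|x + c|.
  move=> c_even; have /H_min : (2 %| H + c)%Z by lia.
  by rewrite -{1}[H]addr0 !Ssum_shift; under eq_bigr do rewrite addr0.
have neg_le := count_lt0_le_ge0 s s_even (s_opt 2 isT).
have pos_le := count_gt0_le_le0 s s_even (s_opt (-2) isT).
have s0 : 0 \in s.
  have /hasP[_ /mapP[u _ ->] yu_le0] : has (<= 0)%R s.
    by rewrite has_count; have := count_gt0_le0 s; lia.
  have /hasP[_ /mapP[w _ ->] yw_ge0] : has (>= 0)%R s.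
    by rewrite has_count; have := count_lt0_ge0 s; lia.
  have [v yv0] := relheight_root hn gamma beta H_even yu_le0 yw_ge0.
  by apply/mapP; exists v; rewrite ?mem_enum ?in_setT.
exact: median_eq0.
Qed.
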